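(* Let $m,n\in\mathbb N$ with $m\ge 5$, $n\ge 4$ and $m-1\mid (n-3)$, and let $i\in\{1,2\}$. Then $r(T_m^i,T_n')=m+n-3$.
   Context: All graphs are finite and simple; a graph ''contains'' $H$ if it has a subgraph isomorphic to $H$. For graphs $G_1,G_2$, the Ramsey number $r(G_1,G_2)$ is the smallest positive integer $N$ such that for every graph $G$ on $N$ vertices, either $G$ contains a copy of $G_1$ or the complement $\overline G$ contains a copy of $G_2$. For $m\ge 5$, $T_m^1$ is the tree with vertex set $\{v_0,\ldots,v_{m-1}\}$ and edges $v_0v_1,\ldots,v_0v_{m-3},v_{m-4}v_{m-2},v_{m-3}v_{m-1}$, and $T_m^2$ is the tree on the same vertex set with edges $v_0v_1,\ldots,v_0v_{m-3},v_{m-3}v_{m-2},v_{m-3}v_{m-1}$. For $n\ge 4$, $T_n'$ is the unique (up to isomorphism) tree on $n$ vertices with maximum degree $n-2$. *)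

From mathcomp Require Import all_boot.
Set Implicit Arguments. Unset Strict Implicit. Unset Printing Implicit Defensive.

Definition simple_graph (V : finType) (G : rel V) : Prop :=
  symmetric G /\ irreflexive G.

Definition compl_graph (V : finType) (G : rel V) : rel V :=
  fun x y => (x != y) && ~~ G x y.

Definition contains (V W : finType) (G : rel V) (H : rel W) : Prop :=
  exists f : W -> V, injective f /\ forall x y, H x y -> G (f x) (f y).

Definition ramsey_prop (V1 V2 : finType) (G1 : rel V1) (G2 : rel V2) (N : nat) : Prop :=
  forall G : rel 'I_N, simple_graph G -> contains G G1 \/ contains (compl_graph G) G2.

Definition is_ramsey_number (V1 V2 : finType) (G1 : rel V1) (G2 : rel V2) (r : nat) : Prop :=
  [/\ 0 < r, ramsey_prop G1 G2 r
    & forall N, 0 < N -> N < r -> ~ ramsey_prop G1 G2 N].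

Definition graph_of_edges (k : nat) (E : nat -> nat -> bool) : rel 'I_k :=
  fun x y => E x y || E y x.
Arguments graph_of_edges : clear implicits.

Definition T1 (m : nat) : rel 'I_m :=
  graph_of_edges m (fun a b =>
    [|| (a == 0) && (1 <= b <= m - 3),
        (a == m - 4) && (b == m - 2)
      | (a == m - 3) && (b == m - 1)]).

Definition T2 (m : nat) : rel 'I_m :=
  graph_of_edges m (fun a b =>
    [|| (a == 0) && (1 <= b <= m - 3),
        (a == m - 3) && (b == m - 2)
      | (a == m - 3) && (b == m - 1)]).

(* T_n' : the tree on n vertices with maximum degree n-2 (unique up to
   isomorphism): edges v0v1,...,v0v_{n-2}, v_{n-2}v_{n-1}. *)
Definition Tprime (n : nat) : rel 'I_n :=
  graph_of_edges n (fun a b =>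
    ((a == 0) && (1 <= b <= n - 2)) || ((a == n - 2) && (b == n - 1))).
Arguments T1 : clear implicits.
Arguments T2 : clear implicits.
Arguments Tprime : clear implicits.

From mathcomp Require Import all_boot zify.
Set Implicit Arguments. Unset Strict Implicit. Unset Printing Implicit Defensive.

(* All trees are handled through a parent function p : every vertex i > 0 of
   a tree on {0..k-1} is joined exactly to p i < i (predicate rooted_tree).
   Such a tree embeds in a graph as soon as one finds distinct images s_i
   with s_i adjacent to s_(p i); this gives the greedy embedding into graphs
   of minimum degree >= k - 1, and, since every vertex is linked to the root,
   confines the image of an embedding to one connected class.

   Lower bound: on m + n - 4 = (m - 1) + (n - 3) vertices take disjoint
   cliques of size m - 1.  No tree on m vertices fits in a clique, and every
   vertex has degree n - 3 in the complement, whereas T_n' has a vertex of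
   degree n - 2.
   Upper bound: let G have m + n - 3 vertices and H be its complement.  If
   every vertex has H-degree <= n - 3, then G has minimum degree >= m - 1 and
   contains every tree on m vertices.  Otherwise pick v with a set A of n - 2
   H-neighbours.  Either some u in A has an H-neighbour w outside A + v, and
   v, A, u, w span T_n' in H; or A is completely joined in G to the m - 2
   remaining vertices, and this K_(3,m-3) contains both T_m^1 and T_m^2. *)

(* The Ramsey property is inherited by larger vertex counts: restrict a
   graph on 'I_N' to its first N vertices. *)
Lemma ramsey_prop_mono (V1 V2 : finType) (G1 : rel V1) (G2 : rel V2) N N' :
  N <= N' -> ramsey_prop G1 G2 N -> ramsey_prop G1 G2 N'.
Proof.
move=> leNN' RN G' [G'sym G'irr].
pose w := widen_ord leNN'.
have winj : injective w by move=> x y /(congr1 val) /= /ord_inj.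
have Gsimple : simple_graph (fun x y => G' (w x) (w y)).
  by split=> [x y|x]; [apply: G'sym | apply: G'irr].
case: (RN _ Gsimple) => [[f [finj fhom]] | [f [finj fhom]]]; [left | right];
  exists (w \o f); split; try exact: inj_comp.
  by move=> x y /fhom.
by move=> x y /fhom; rewrite /compl_graph /= (inj_eq winj).
Qed.

Lemma is_ramsey_number_of_bounds (V1 V2 : finType) (G1 : rel V1) (G2 : rel V2) r :
  0 < r -> ramsey_prop G1 G2 r -> ~ ramsey_prop G1 G2 r.-1 -> is_ramsey_number G1 G2 r.
Proof.
move=> r0 upper lower; split=> // N _ ltNr RN; apply: lower.
by apply: ramsey_prop_mono RN; lia.
Qed.

Lemma compl_graph_simple (V : finType) (G : rel V) :
  simple_graph G -> simple_graph (compl_graph G).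
Proof. by case=> Gsym _; split=> [x y|x]; rewrite /compl_graph ?eqxx // eq_sym Gsym. Qed.

Lemma compl_degree (V : finType) (G : rel V) (v : V) : simple_graph G ->
  #|[set u | G v u]| + #|[set u | compl_graph G v u]| = #|V|.-1.
Proof.
case=> _ Girr; rewrite -(cardsC1 v) -cardsUI.
have -> : [set u | G v u] :&: [set u | compl_graph G v u] = set0.
  by apply/setP => u; rewrite !inE /compl_graph; case: (G v u); rewrite ?andbF.
rewrite cards0 addn0; apply: eq_card => u; rewrite !inE /compl_graph.
by case: (u =P v) => [->|/eqP uv]; rewrite ?Girr ?eqxx // eq_sym uv; case: (G v u).
Qed.

Lemma subset_of_card (T : finType) (S : {set T}) k :
  k <= #|S| -> exists2 A : {set T}, A \subset S & #|A| = k.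
Proof.
move=> leSk; exists [set x in take k (enum S)].
  by apply/subsetP => x; rewrite inE => /mem_take; rewrite mem_enum.
by rewrite cardsE (card_uniqP _) ?take_uniq ?enum_uniq // size_takel // -cardE.
Qed.

Lemma card_ge_injection (V : finType) k (g : 'I_k -> V) (S : {set V}) :
  injective g -> (forall j, g j \in S) -> k <= #|S|.
Proof.
move=> ginj gS; rewrite -[k]card_ord -(card_imset _ ginj).
by apply/subset_leq_card/subsetP => _ /imsetP [j _ ->].
Qed.

Definition rooted_tree k (T : rel 'I_k) (p : nat -> nat) : Prop :=
  (forall i, 0 < i -> p i < i) /\
  forall x y : 'I_k,
    T x y = ((0 < y) && (x == p y :> nat)) || ((0 < x) && (y == p x :> nat)).

Lemma rooted_tree_of_edges k (E : nat -> nat -> bool) (p : nat -> nat) :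
  (forall i, 0 < i -> p i < i) ->
  (forall a b, a < k -> b < k -> E a b = (0 < b) && (a == p b)) ->
  rooted_tree (graph_of_edges k E) p.
Proof. by move=> ltp Ep; split=> // x y; rewrite /graph_of_edges !Ep. Qed.

Definition p1 m i := if i == m - 1 then m - 3 else if i == m - 2 then m - 4 else 0.
Definition p2 m i := if m - 2 <= i then m - 3 else 0.
Definition pT n i := if i == n - 1 then n - 2 else 0.

Lemma T1_tree m : 5 <= m -> rooted_tree (T1 m) (p1 m).
Proof.
by move=> m5; apply: rooted_tree_of_edges => [i|a b ? ?];
  rewrite /p1; repeat case: ifP => ?; lia.
Qed.

Lemma T2_tree m : 4 <= m -> rooted_tree (T2 m) (p2 m).
Proof.
by move=> m4; apply: rooted_tree_of_edges => [i|a b ? ?];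
  rewrite /p2; case: ifP => ?; lia.
Qed.

Lemma Tprime_tree n : 2 <= n -> rooted_tree (Tprime n) (pT n).
Proof.
by move=> n2; apply: rooted_tree_of_edges => [i|a b ? ?];
  rewrite /pT; case: ifP => ?; lia.
Qed.

Lemma tree_embed_seq (V : finType) (R : rel V) k (T : rel 'I_k) p (d : V) (s : seq V) :
  rooted_tree T p -> symmetric R -> uniq s -> size s = k ->
  (forall i, 0 < i < k -> R (nth d s i) (nth d s (p i))) -> contains R T.
Proof.
move=> [_ Tedge] Rsym us ss Rs; exists (fun x : 'I_k => nth d s x); split.
  by move=> x y /eqP; rewrite nth_uniq ?ss // => /eqP /ord_inj.
move=> x y; rewrite Tedge => /orP [] /andP [pos /eqP ->].
  by rewrite Rsym; apply: Rs; rewrite pos ltn_ord.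
by apply: Rs; rewrite pos ltn_ord.
Qed.

(* Greedy construction of such lists of every length j <= k when R has
   minimum degree >= k - 1: the parent image of the next vertex has at most
   k - 2 neighbours among the vertices already used, so a fresh one exists. *)
Lemma greedy_parent_seq (V : finType) (R : rel V) (d : V) k (p : nat -> nat) :
  symmetric R -> irreflexive R -> (forall v, k.-1 <= #|[set u | R v u]|) ->
  (forall i, 0 < i -> p i < i) ->
  forall j, j <= k -> exists s : seq V, [/\ uniq s, size s = j &
    forall i, 0 < i < j -> R (nth d s i) (nth d s (p i))].
Proof.
move=> Rsym Rirr Rdeg ltp; elim=> [|[|j] IH] lejk.
- by exists [::]; split => // i; lia.
- by exists [:: d]; split => // i; lia.
have [s [us ss Rs]] := IH (ltnW lejk).
set y := nth d s (p j.+1).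
have ys : y \in s by apply: mem_nth; rewrite ss; exact: ltp.
have [z] : exists2 z, R y z & z \notin s.
  apply/exists_inP; rewrite -negb_forall_in; apply/negP => /forall_inP Ry_in_s.
  have : [set u | R y u] \subset [set u in s] :\ y.
    apply/subsetP => u; rewrite !inE => Ryu; rewrite Ry_in_s ?andbT //.
    by apply: contraTneq Ryu => ->; rewrite Rirr.
  move/subset_leq_card; have := cardsD1 y [set u in s].
  by rewrite inE ys cardsE (card_uniqP us) ss; have := Rdeg y; lia.
move=> Ryz zs; exists (rcons s z); split.
- by rewrite rcons_uniq zs.
- by rewrite size_rcons ss.
move=> i /andP [i0 lti]; rewrite !nth_rcons ss.
have ltpi := ltp i i0.
case: (ltnP i j.+1) => [ltij|geij].
  by rewrite (ltn_trans ltpi ltij); apply: Rs; rewrite i0.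
have -> : i = j.+1 by lia.
by rewrite eqxx ltp // Rsym.
Qed.

Lemma min_degree_contains_tree (V : finType) (R : rel V) (d : V) k (T : rel 'I_k) p :
  rooted_tree T p -> symmetric R -> irreflexive R ->
  (forall v, k.-1 <= #|[set u | R v u]|) -> contains R T.
Proof.
move=> Ttree Rsym Rirr Rdeg.
have [s [us ss Rs]] := greedy_parent_seq d Rsym Rirr Rdeg Ttree.1 (leqnn k).
exact: tree_embed_seq Ttree Rsym us ss Rs.
Qed.

(* A function c constant along the edges of R is constant on the image of an
   embedded tree, since every vertex is connected to the root. *)
Lemma tree_image_in_class (V : finType) (R : rel V) (C : Type) (c : V -> C) k
    (T : rel 'I_k) p (f : 'I_k -> V) :
  rooted_tree T p -> (forall x y, T x y -> R (f x) (f y)) ->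
  (forall x y, R x y -> c x = c y) -> forall i j : 'I_k, c (f i) = c (f j).
Proof.
move=> [ltp Tedge] fhom cR.
suff to_root (r : 'I_k) : r = 0 :> nat -> forall i, c (f i) = c (f r).
  move=> i j; have k0 : 0 < k by apply: leq_ltn_trans (ltn_ord i).
  by rewrite (to_root (Ordinal k0)) // (to_root (Ordinal k0) erefl j).
move=> r0 i; suff: forall t (x : 'I_k), x <= t -> c (f x) = c (f r) by apply.
elim=> [|t IH] x lext.
  by congr (c (f _)); apply: ord_inj; lia.
case: (leqP x t) => [/IH //|ltx].
have x0 : 0 < x by lia.
have ltpk : p x < k := ltn_trans (ltp x x0) (ltn_ord x).
rewrite -(IH (Ordinal ltpk)) /=; last by have := ltp x x0; lia.
by apply/esym/cR/fhom; rewrite Tedge /= x0 eqxx.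
Qed.

Lemma Tprime_center_degree (V : finType) (R : rel V) n :
  2 <= n -> contains R (Tprime n) -> exists v, n - 2 <= #|[set u | R v u]|.
Proof.
move=> n2 [f [finj fhom]]; have [_ Tedge] := Tprime_tree n2.
have n0 : 0 < n by lia.
have leaf (j : 'I_(n - 2)) : j.+1 < n by have := ltn_ord j; lia.
exists (f (Ordinal n0)); apply: (@card_ge_injection _ _ (fun j => f (Ordinal (leaf j)))).
  by move=> j j' /finj /(congr1 (@nat_of_ord _)) [] /ord_inj.
move=> j; rewrite inE; apply: fhom; rewrite Tedge /= /pT.
by have := ltn_ord j; case: ifP => ?; lia.
Qed.

Definition block_graph (q N : nat) : rel 'I_N :=
  fun x y => (x != y) && (x %/ q == y %/ q).
Arguments block_graph : clear implicits.

Lemma block_graph_simple (q N : nat) : simple_graph (block_graph q N).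
Proof.
by split=> [x y|x]; rewrite /block_graph ?eqxx // eq_sym [_ %/ q == _]eq_sym.
Qed.

(* A tree with more than q vertices does not fit inside one block: the
   residues mod q of its images would be distinct. *)
Lemma block_graph_no_tree (q N : nat) k (T : rel 'I_k) p :
  0 < q -> q < k -> rooted_tree T p -> ~ contains (block_graph q N) T.
Proof.
move=> q0 ltqk Ttree [f [finj fhom]].
have same_block : forall i j : 'I_k, f i %/ q = f j %/ q.
  by apply: (tree_image_in_class (c := fun x : 'I_N => x %/ q) Ttree fhom) => x y /andP [_ /eqP].
pose r (i : 'I_k) : 'I_q := Ordinal (ltn_pmod (f i) q0).
suff : k <= q by lia.
rewrite -[k]card_ord -[q in _ <= q]card_ord; apply: (@leq_card _ _ r) => i j /(congr1 (@nat_of_ord _)) /= rij.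
by apply/finj/ord_inj; rewrite (divn_eq (f i) q) (divn_eq (f j) q) rij (same_block i j).
Qed.

(* When q divides N, every block is full, so complement degrees are N - q. *)
Lemma block_graph_compl_degree (q N : nat) (x : 'I_N) :
  0 < q -> q %| N -> #|[set y | compl_graph (block_graph q N) x y]| <= N - q.
Proof.
move=> q0 dvdqN; set b := x %/ q.
have in_range (j : 'I_q) : b * q + j < N.
  have [d Nd] := dvdnP dvdqN.
  have ltbd : b < d by rewrite ltn_divLR // -Nd.
  have : b.+1 * q <= d * q by rewrite leq_mul2r ltbd orbT.
  by rewrite Nd; have := ltn_ord j; lia.
have block_card : q <= #|[set y : 'I_N | y %/ q == b]|.
  apply: (@card_ge_injection _ _ (fun j => Ordinal (in_range j))).
    by move=> j j' /(congr1 (@nat_of_ord _)) /= /addnI /ord_inj.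
  by move=> j; rewrite inE /= divnMDl // divn_small ?addn0.
have : [set y | compl_graph (block_graph q N) x y] \subset ~: [set y : 'I_N | y %/ q == b].
  apply/subsetP => y; rewrite !inE /compl_graph /block_graph => /andP [-> /=].
  by rewrite eq_sym.
move/subset_leq_card; have := cardsC [set y : 'I_N | y %/ q == b]; rewrite card_ord; lia.
Qed.

Lemma ramsey_lower m n (T : rel 'I_m) p :
  2 <= m -> 3 <= n -> (m - 1) %| (n - 3) -> rooted_tree T p ->
  ~ ramsey_prop T (Tprime n) (m + n - 4).
Proof.
move=> m2 n3 dvd Ttree /(_ _ (block_graph_simple (m - 1) (m + n - 4))) [].
  by apply: block_graph_no_tree Ttree; lia.
have dvdN : (m - 1) %| (m + n - 4).
  by rewrite (_ : m + n - 4 = (m - 1) + (n - 3)); [rewrite dvdn_add | lia].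
case/(Tprime_center_degree (_ : 2 <= n)) => [|v]; first lia.
by have := block_graph_compl_degree v (_ : 0 < m - 1) dvdN; lia.
Qed.

Lemma Tprime_embed (V : finType) (R : rel V) n (v u w : V) (L : {set V}) :
  3 <= n -> symmetric R -> uniq [:: v; u; w] ->
  v \notin L -> u \notin L -> w \notin L -> #|L| = n - 3 ->
  {in L, forall x, R v x} -> R v u -> R u w -> contains R (Tprime n).
Proof.
move=> n3 Rsym uniq_vuw vL uL wL Lsize RvL Rvu Ruw.
set s := v :: enum L ++ [:: u; w].
have s_tail j : nth v s (n - 3 + j).+1 = nth v [:: u; w] j.
  by rewrite /= nth_cat -cardE Lsize ltnNge leq_addr addKn.
have s_in_L i : 0 < i <= n - 3 -> nth v s i \in L.
  case: i => [//|i] /= ltin; rewrite nth_cat -cardE Lsize ltin -mem_enum.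
  by apply: mem_nth; rewrite -cardE Lsize.
apply: (tree_embed_seq (d := v) (s := s) (Tprime_tree (ltnW n3)) Rsym).
- move: uniq_vuw; rewrite /= !inE !negb_or => /and3P [/andP [vu vw] uw _].
  rewrite /s /= mem_cat mem_enum (negbTE vL) !inE (negbTE vu) (negbTE vw).
  by rewrite cat_uniq enum_uniq /= !inE !mem_enum (negbTE uL) (negbTE wL) uw.
- by rewrite /= size_cat -cardE Lsize /=; lia.
move=> i /andP [i0 ltin]; rewrite /pT; case: ifP => [/eqP lasti|/negbT notlast].
  have -> : i = (n - 3 + 1).+1 by lia.
  have -> : n - 2 = (n - 3 + 0).+1 by lia.
  by rewrite !s_tail Rsym.
case: (leqP i (n - 3)) => [lein|gtin].
  by rewrite Rsym RvL ?s_in_L ?i0.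
have -> : i = (n - 3 + 0).+1 by lia.
by rewrite s_tail Rsym.
Qed.

(* Parent functions of trees that are subgraphs of K_(3, k-3): vertices
   1..k-3 hang from the root 0, and k-2, k-1 hang from vertices in 1..k-3;
   the parts are {0, k-2, k-1} and {1, .., k-3}. *)
Definition biclique_shape k (p : nat -> nat) : Prop :=
  (forall i, 0 < i <= k - 3 -> p i = 0) /\
  (forall i, k - 3 < i < k -> 0 < p i <= k - 3).

Lemma T1_shape m : 5 <= m -> biclique_shape m (p1 m).
Proof. by move=> m5; split=> i ?; rewrite /p1; repeat case: ifP => ?; lia. Qed.

Lemma T2_shape m : 4 <= m -> biclique_shape m (p2 m).
Proof. by move=> m4; split=> i ?; rewrite /p2; case: ifP => ?; lia. Qed.

Lemma biclique_contains_tree (V : finType) (R : rel V) k (T : rel 'I_k) p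
    (X Y : {set V}) :
  rooted_tree T p -> biclique_shape k p -> symmetric R -> 3 <= k ->
  [disjoint X & Y] -> 3 <= #|X| -> k - 3 <= #|Y| ->
  (forall x y, x \in X -> y \in Y -> R x y) -> contains R T.
Proof.
move=> Ttree [p_leaf p_top] Rsym k3 XY X3 Yk RXY.
have [x0 [x1 [x2 [xs eX]]]] : exists x0 x1 x2 xs, enum X = [:: x0, x1, x2 & xs].
  move: X3; rewrite cardE; case: (enum X) => [|x0 [|x1 [|x2 xs]]] // _.
  by exists x0, x1, x2, xs.
have inX x : x \in [:: x0, x1, x2 & xs] -> x \in X by rewrite -eX mem_enum.
set ys := take (k - 3) (enum Y).
have ys_size : size ys = k - 3 by rewrite size_takel // -cardE.
have inY y : y \in ys -> y \in Y by move/mem_take; rewrite mem_enum.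
have notin_ys x : x \in [:: x0, x1, x2 & xs] -> x \notin ys.
  by move/inX => xX; apply/negP => /inY; rewrite (disjointFr XY xX).
set s := x0 :: ys ++ [:: x1; x2].
have s_tail j : nth x0 s (k - 3 + j).+1 = nth x0 [:: x1; x2] j.
  by rewrite /= nth_cat ys_size ltnNge leq_addr addKn.
have s_in_Y i : 0 < i <= k - 3 -> nth x0 s i \in Y.
  case: i => [//|i] /= ltik; apply: inY; rewrite nth_cat ys_size ltik.
  by apply: mem_nth; rewrite ys_size.
apply: (tree_embed_seq (d := x0) (s := s) Ttree Rsym).
- have := enum_uniq X; rewrite eX /= !inE !negb_or.
  move=> /and4P [/and3P [x01 x02 _] /andP [x12 _] _ _].
  have [x0ys x1ys x2ys] : [/\ x0 \notin ys, x1 \notin ys & x2 \notin ys].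
    by split; apply: notin_ys; rewrite !inE eqxx ?orbT.
  rewrite /s /= mem_cat negb_or x0ys !inE negb_or x01 x02 cat_uniq take_uniq ?enum_uniq //=.
  by rewrite !inE (negbTE x1ys) (negbTE x2ys) x12.
- by rewrite /= size_cat ys_size /=; lia.
move=> i /andP [i0 ltik]; case: (leqP i (k - 3)) => [leik|gtik].
  by rewrite p_leaf ?i0 // Rsym RXY ?s_in_Y ?i0 ?inX ?inE ?eqxx.
have /andP [pi0 pik] : 0 < p i <= k - 3 by apply: p_top; rewrite gtik.
rewrite RXY ?s_in_Y ?pi0 //; apply: inX.
have [->|->] : i = (k - 3 + 0).+1 \/ i = (k - 3 + 1).+1 by lia.
  by rewrite s_tail !inE eqxx ?orbT.
by rewrite s_tail !inE eqxx ?orbT.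
Qed.

Section UpperBound.

Variables (V : finType) (G : rel V) (m n : nat).
Hypotheses (Gsimple : simple_graph G) (m5 : 5 <= m) (n5 : 5 <= n)
  (cardV : #|V| = m + n - 3).
Local Notation H := (compl_graph G).

(* Small complement degrees force minimum degree >= m - 1 in G. *)
Lemma low_compl_degree_case :
  (forall v, #|[set u | H v u]| <= n - 3) -> contains G (T1 m) /\ contains G (T2 m).
Proof.
move=> Hdeg; have [Gsym Girr] := Gsimple.
have /card_gt0P [d _] : 0 < #|V| by rewrite cardV; lia.
have Gdeg v : m.-1 <= #|[set u | G v u]|.
  by have := compl_degree v Gsimple; have := Hdeg v; lia.
split; apply: (min_degree_contains_tree d _ Gsym Girr Gdeg).
  exact: T1_tree.
by apply: T2_tree; lia.
Qed.

(* A vertex v of complement degree >= n - 2, with A a set of n - 2 of its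
   complement neighbours: either some u in A escapes A + v in the complement,
   giving T_n', or A is completely joined in G to the rest. *)
Lemma high_compl_degree_case v :
  n - 2 <= #|[set u | H v u]| ->
  (contains G (T1 m) /\ contains G (T2 m)) \/ contains H (Tprime n).
Proof.
move=> degv; have [A AH Asize] := subset_of_card degv.
have [Gsym _] := Gsimple; have [Hsym Hirr] := compl_graph_simple Gsimple.
have HvA x : x \in A -> H v x by move/(subsetP AH); rewrite inE.
have vA : v \notin A by apply/negP => /HvA; rewrite Hirr.
pose escape := [pred uw : V * V | [&& uw.1 \in A, uw.2 \notin A, uw.2 != v & H uw.1 uw.2]].
have [[u w] /and4P [/= uA wA wv Huw] | no_escape] := pickP escape.
  right; have vu : v != u by apply: contraNneq vA => ->.
  have uw : u != w by apply: contraNneq wA => <-.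
  apply: (Tprime_embed (L := A :\ u)) (HvA u uA) Huw => //.
  - lia.
  - by rewrite /= !inE negb_or vu uw (eq_sym v w) wv.
  - by rewrite !inE negb_and vA orbT.
  - by rewrite !inE eqxx.
  - by rewrite !inE negb_and wA orbT.
  - by have := cardsD1 u A; rewrite uA Asize; lia.
  by move=> x; rewrite !inE => /andP [_ /HvA].
left; pose Y := ~: (v |: A).
have GAY x y : x \in A -> y \in Y -> G x y.
  move=> xA; rewrite !inE negb_or => /andP [yv yA].
  have := no_escape (x, y); rewrite /= xA yA yv /= => /negbT.
  rewrite negb_and !negbK => /orP [/eqP xy|//].
  by move: yA; rewrite -xy xA.
have XY : [disjoint A & Y] by rewrite disjoints_subset setCK subsetUr.
have Ysize : m - 3 <= #|Y|.
  by rewrite /Y; have := cardsC (v |: A); rewrite cardsU1 vA Asize cardV /=; lia.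
have A3 : 3 <= #|A| by rewrite Asize; lia.
have [m3 m4] : 3 <= m /\ 4 <= m by lia.
split.
  exact: biclique_contains_tree (T1_tree m5) (T1_shape m5) Gsym m3 XY A3 Ysize GAY.
exact: biclique_contains_tree (T2_tree m4) (T2_shape m4) Gsym m3 XY A3 Ysize GAY.
Qed.

Lemma upper_bound :
  (contains G (T1 m) /\ contains G (T2 m)) \/ contains H (Tprime n).
Proof.
have [v degv | low] := pickP [pred v | n - 2 <= #|[set u | H v u]|].
  exact: high_compl_degree_case degv.
left; apply: low_compl_degree_case => v.
by move/negbT: (low v); rewrite /= -ltnNge => ?; lia.
Qed.

End UpperBound.

(* The divisibility forces n - 3 >= m - 1 >= 4, so both bounds apply. *)
Theorem theorem5p2 (m n : nat) :
  5 <= m -> 4 <= n -> (m - 1) %| (n - 3) ->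
  is_ramsey_number (T1 m) (Tprime n) (m + n - 3) /\
  is_ramsey_number (T2 m) (Tprime n) (m + n - 3).
Proof.
move=> m5 n4 dvd.
have n5 : 5 <= n by have := dvdn_leq (_ : 0 < n - 3) dvd; lia.
have upper (G : rel 'I_(m + n - 3)) : simple_graph G ->
    (contains G (T1 m) /\ contains G (T2 m)) \/ contains (compl_graph G) (Tprime n).
  by move=> Gsimple; apply: upper_bound; rewrite ?card_ord.
have [N0 prevN] : 0 < m + n - 3 /\ (m + n - 3).-1 = m + n - 4 by lia.
split; apply: is_ramsey_number_of_bounds; rewrite ?prevN //.
- by move=> G /upper [[]|]; auto.
- by apply: ramsey_lower (T1_tree m5); lia.
- by move=> G /upper [[]|]; auto.
- by apply: ramsey_lower (T2_tree _); lia.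
Qed.
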